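(* Let $a$ be an element of a ring $K$ such that $z_0a^m+z_1a^{m-1}+\dots+z_{m-1}a=0$ for some positive integer $m$ and integers $z_0,\dots,z_{m-1}$ with $z_0>0$, and let $k=\gcd(z_0,z_1,\dots,z_{m-1})$. Suppose moreover that $d\,f(a)=0$ for some integer $d>1$ and some monic $f\in\mathbb{Z}[x]$ with $f(0)=0$. Then $k\,\varphi(a)=0$ for some monic $\varphi\in\mathbb{Z}[x]$ with $\varphi(0)=0$ and $\deg\varphi\le m$.
   Context: Rings are associative and not necessarily unital. *)

From HB Require Import structures.
From mathcomp Require Import all_boot all_order all_algebra.
Set Implicit Arguments. Unset Strict Implicit. Unset Printing Implicit Defensive.
Import Order.TTheory GRing.Theory Num.Theory.
Local Open Scope ring_scope.

Definition nonunital_ring_axioms (V : zmodType) (mul : V -> V -> V) : Prop :=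
  [/\ associative mul, left_distributive mul +%R & right_distributive mul +%R].

(* rpow mul a n = a^n for n >= 1 (a^1 = a, a^(n+1) = a * a^n). *)
Definition rpow (V : zmodType) (mul : V -> V -> V) (a : V) (n : nat) : V :=
  iter n.-1 (mul a) a.

(* Evaluation at a of an integer polynomial without constant term:
   sum_{i >= 1} p_i a^i (the constant coefficient is ignored; it is
   required to be 0 wherever this is used). *)
Definition eval0 (V : zmodType) (mul : V -> V -> V) (p : {poly int}) (a : V) : V :=
  \sum_(1 <= i < size p) (rpow mul a i) *~ p`_i.

From HB Require Import structures.
From mathcomp Require Import all_boot all_order all_algebra.
From mathcomp Require Import zify.
Set Implicit Arguments. Unset Strict Implicit. Unset Printing Implicit Defensive.
Import Order.TTheory GRing.Theory Num.Theory.
Local Open Scope ring_scope.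

(* Write b_j = k a^j.  Dividing the given relation by k yields the recurrence
   sum_(1 <= i <= m) e_i b_(i+r) = 0 (r >= 0) with e_i = z_(m-i) / k, whose top
   coefficient e_m = z_0 / k is positive and whose coefficients have no common
   prime factor; d f(a) = 0 yields a second recurrence whose top coefficient d
   divides all the others.  It suffices to put b_m in the Z-span N of
   b_1, ..., b_(m-1).  The first recurrence gives e_m^j b_j in N, and feeding
   this into the second gives E b_j in N for E = d e_m^(deg f) and all j.  On the
   other hand, for a prime p, solving the first recurrence for its last
   coefficient prime to p and using Bezout gives b_j in N + p B, where B is the
   span of all the b_j; multiplying such congruences, b_j in N + E B for every
   E > 0.  With E = d e_m^(deg f) this puts every b_j in N. *)

Section IntegralSpan.

Variable V : zmodType.
Implicit Types (P Q : V -> Prop) (x y : V).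

Inductive zspan P : V -> Prop :=
  | zspan_gen x of P x : zspan P x
  | zspan0 : zspan P 0
  | zspanB x y of zspan P x & zspan P y : zspan P (x - y).

Lemma zspanN P x : zspan P x -> zspan P (- x).
Proof. by move=> Px; rewrite -sub0r; apply: zspanB => //; apply: zspan0. Qed.

Lemma zspanD P x y : zspan P x -> zspan P y -> zspan P (x + y).
Proof. by move=> Px Py; rewrite -[y]opprK; apply/zspanB/zspanN. Qed.

Lemma zspanMz P x n : zspan P x -> zspan P (x *~ n).
Proof.
move=> Px; have Mn k : zspan P (x *+ k).
  by elim: k => [|k IHk]; rewrite ?mulr0n ?mulrS; [apply: zspan0 | apply: zspanD].
by case: n => k; rewrite ?NegzE ?mulrNz; [apply: Mn | apply/zspanN/Mn].
Qed.

Lemma zspan_sum P (I : Type) (r : seq I) (Pi : pred I) (F : I -> V) :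
  (forall i, Pi i -> zspan P (F i)) -> zspan P (\sum_(i <- r | Pi i) F i).
Proof. by move=> PF; apply: big_ind => //; [apply: zspan0 | apply: zspanD]. Qed.

Lemma zspan_Mz_subset P Q n x :
  (forall y, P y -> zspan Q (y *~ n)) -> zspan P x -> zspan Q (x *~ n).
Proof.
move=> PQ; elim=> [y /PQ //||y z _ Qy _ Qz]; first by rewrite mul0rz; apply: zspan0.
by rewrite mulrzBl; apply: zspanB.
Qed.

Lemma zspan_subset P Q x :
  (forall y, P y -> zspan Q y) -> zspan P x -> zspan Q x.
Proof.
by move=> PQ; rewrite -[x]mulr1z; apply: zspan_Mz_subset => y /PQ; rewrite mulr1z.
Qed.

End IntegralSpan.

Section LinearRecurrence.

Variables (V : zmodType) (b : nat -> V).

(* Terms are indexed from 1: [b 0] never occurs, which matters because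
   [rpow mul a 0] is [a]. *)
Definition linrec (e : nat -> int) (n : nat) :=
  forall r, \sum_(1 <= i < n.+1) b (i + r) *~ e i = 0.

Definition initial_term (n : nat) (x : V) := exists2 i, (0 < i < n)%N & x = b i.

Definition initial_or_scaled_term (n : nat) (E : int) (x : V) :=
  initial_term n x \/ exists2 j, (0 < j)%N & x = b j *~ E.

Lemma linrec_shift (L : {additive V -> V}) e n :
  (forall j, (0 < j)%N -> L (b j) = b j.+1) ->
  \sum_(1 <= i < n.+1) b i *~ e i = 0 -> linrec e n.
Proof.
move=> Lb rec0; elim=> [|r IHr]; first by under eq_bigr do rewrite addn0.
rewrite -[RHS](raddf0 L) -[in RHS]IHr raddf_sum.
by apply: eq_big_nat => i /andP[i_gt0 _]; rewrite raddfMz Lb ?addnS // addn_gt0 i_gt0.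
Qed.

Lemma zspan_initial_termP n x :
  zspan (initial_term n) x -> exists w : nat -> int, x = \sum_(1 <= i < n) b i *~ w i.
Proof.
elim=> [_ [j /andP[j_gt0 j_lt] ->] | | y z _ [wy ->] _ [wz ->]].
- exists (fun i => (i == j)%:R).
  rewrite (bigD1_seq j) ?mem_index_iota ?j_gt0 ?iota_uniq //= eqxx mulr1z.
  by rewrite big1 ?addr0 // => i /negbTE->; rewrite mulr0z.
- by exists (fun=> 0); rewrite big1 // => i _; rewrite mulr0z.
- by exists (fun i => wy i - wz i); rewrite -sumrB; apply: eq_bigr => i _; rewrite mulrzBr.
Qed.

Lemma linrec_isolate e n i0 j : linrec e n -> (0 < i0 <= n)%N -> (i0 <= j)%N ->
  b j *~ e i0 = - \sum_(1 <= i < n.+1 | i != i0) b (i + (j - i0))%N *~ e i.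
Proof.
move=> rec /andP[i0_gt0 i0_le] le_i0j; apply/eqP; rewrite -addr_eq0.
have := rec (j - i0)%N; rewrite (bigD1_seq i0) ?mem_index_iota ?i0_gt0 ?ltnS ?iota_uniq //=.
by rewrite subnKC // => ->.
Qed.

(* Solving the recurrence for [b j *~ e n] and scaling by [h j] expresses
   [b j *~ g j] through the [b l *~ g l] with [l < j]. *)
Lemma linrec_scaled_span e n P (g h : nat -> int) :
  linrec e n -> (0 < n)%N ->
  (forall j, (0 < j < n)%N -> zspan P (b j *~ g j)) ->
  (forall j, (n <= j)%N -> g j = e n * h j) ->
  (forall i j, (0 < i < n)%N -> (n <= j)%N -> (g (i + (j - n))%N %| h j * e i)%Z) ->
  forall j, (0 < j)%N -> zspan P (b j *~ g j).
Proof.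
move=> rec n_gt0 base gE gdvd; elim/ltn_ind => j IHj j_gt0.
have [lt_jn | le_nj] := ltnP j n; first by apply: base; rewrite j_gt0.
rewrite gE // mulrzA (linrec_isolate rec _ le_nj) ?n_gt0 ?leqnn //.
rewrite mulNrz mulrz_suml big_seq_cond.
apply/zspanN/zspan_sum => i /andP[]; rewrite mem_index_iota => /andP[i_gt0 i_le] i_neq.
have lt_in : (0 < i < n)%N by rewrite i_gt0 ltn_neqAle i_neq -ltnS.
have [q hq] := dvdzP (gdvd i j lt_in le_nj).
by rewrite -mulrzA [e i * _]mulrC hq mulrzA mulrzAC; apply/zspanMz/IHj; lia.
Qed.

Variables (e : nat -> int) (n : nat).
Hypothesis rec : linrec e n.

Lemma linrec_span_mod_prime p : prime p ->
  (exists2 i, (0 < i <= n)%N & ~~ (p%:Z %| e i)%Z) ->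
  forall j, (0 < j)%N -> zspan (initial_or_scaled_term n p) (b j).
Proof.
move=> p_pr [i1 i1_range i1_ndvd].
(* Solving the recurrence for the largest index [i0] whose coefficient is prime
   to [p], the later terms vanish modulo [p] and the earlier ones come first. *)
pose Q i := (0 < i <= n)%N && ~~ (p%:Z %| e i)%Z.
have Q_le i : Q i -> (i <= n)%N by case/andP=> /andP[].
have [i0 /andP[/andP[i0_gt0 i0_le] i0_ndvd] i0_max] :=
  ex_maxnP (ex_intro Q i1 (introT andP (conj i1_range i1_ndvd))) Q_le.
have dvd_above i : (i0 < i <= n)%N -> (p%:Z %| e i)%Z.
  case/andP=> lt_i0i le_in; apply/negPn/negP => ndvd.
  have := i0_max i; rewrite /Q le_in ndvd (leq_ltn_trans (leq0n _) lt_i0i).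
  by move/(_ isT); rewrite leqNgt lt_i0i.
have /coprimezP[[u v] /= uv] : coprimez (e i0) p%:Z.
  by rewrite coprimezE coprime_sym prime_coprime // -dvdzE.
elim/ltn_ind => j IHj j_gt0.
have [lt_ji0 | le_i0j] := ltnP j i0.
  by apply: zspan_gen; left; exists j; rewrite ?j_gt0 ?(leq_trans lt_ji0).
rewrite -[b j]mulr1z -uv mulrzDr; apply: zspanD; last first.
  by rewrite mulrC mulrzA; apply/zspanMz/zspan_gen; right; exists j.
rewrite mulrC mulrzA (linrec_isolate rec _ le_i0j) ?i0_gt0 //.
rewrite mulNrz mulrz_suml big_seq_cond.
apply/zspanN/zspan_sum => i; rewrite mem_index_iota => /andP[i_gt0 i_neq].
have [lt_ii0 | lt_i0i | eq_ii0] := ltngtP i i0; last by rewrite eq_ii0 eqxx in i_neq.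
  by apply/zspanMz/zspanMz/IHj; lia.
have /dvdzP[q ->] : (p%:Z %| e i)%Z.
  by apply: dvd_above; rewrite lt_i0i -ltnS; case/andP: i_gt0.
rewrite [q * _]mulrC mulrzA; apply/zspanMz/zspanMz/zspan_gen; right.
exists (i + (j - i0))%N => //.
by rewrite addn_gt0; case/andP: i_gt0 => ->.
Qed.

Lemma linrec_span_mod :
  (forall p, prime p -> exists2 i, (0 < i <= n)%N & ~~ (p%:Z %| e i)%Z) ->
  forall E : nat, (0 < E)%N ->
  forall j, (0 < j)%N -> zspan (initial_or_scaled_term n E%:Z) (b j).
Proof.
move=> e_coprime; elim/ltn_ind => E IHE E_gt0 j j_gt0.
have [E_le1 | E_gt1] := leqP E 1.
  have -> : E = 1%N by lia.
  by apply: zspan_gen; right; exists j; rewrite ?mulr1z.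
have p_pr := pdiv_prime E_gt1; set p := pdiv E in p_pr.
have E_eq : E = (E %/ p * p)%N by rewrite divnK // pdiv_dvd.
have E'_gt0 : (0 < E %/ p)%N by rewrite divn_gt0 ?prime_gt0 // dvdn_leq // pdiv_dvd.
have E'_lt : (E %/ p < E)%N by rewrite ltn_Pdiv ?prime_gt1.
apply: zspan_subset (IHE _ E'_lt E'_gt0 j j_gt0) => y [y_init | [l l_gt0 ->]].
  by apply: zspan_gen; left.
apply: zspan_Mz_subset (linrec_span_mod_prime p_pr (e_coprime p p_pr) l_gt0).
move=> _ [[i i_range ->] | [l' l'_gt0 ->]].
  by apply/zspanMz/zspan_gen; left; exists i.
apply: zspan_gen; right; exists l' => //.
by rewrite -mulrzA -PoszM mulnC -E_eq.
Qed.

Lemma linrec_initial_span (E : int) :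
  (forall p, prime p -> exists2 i, (0 < i <= n)%N & ~~ (p%:Z %| e i)%Z) ->
  0 < E -> (forall j, (0 < j)%N -> zspan (initial_term n) (b j *~ E)) ->
  forall j, (0 < j)%N -> zspan (initial_term n) (b j).
Proof.
move=> e_coprime E_gt0 EN j j_gt0.
have := linrec_span_mod e_coprime (E := `|E|%N) _ j_gt0.
rewrite gez0_abs ?ltW // absz_gt0 gt_eqF // => /(_ isT).
by apply: zspan_subset => y [y_init | [l l_gt0 ->]]; [apply: zspan_gen | apply: EN].
Qed.

Lemma linrec_top_power_span :
  (0 < n)%N -> forall j, (0 < j)%N -> zspan (initial_term n) (b j *~ e n ^+ j).
Proof.
move=> n_gt0; apply: (linrec_scaled_span (h := fun j => e n ^+ j.-1) rec) => //.
- by move=> j j_range; apply/zspanMz/zspan_gen; exists j.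
- by move=> j le_nj; rewrite -exprS prednK // (leq_trans n_gt0).
- by move=> i j i_range le_nj; apply/dvdz_mulr/dvdz_exp2l; lia.
Qed.

Lemma linrec2_scaled_span e' n' :
  linrec e' n' -> (0 < n)%N -> (0 < n')%N ->
  (forall i, (0 < i < n')%N -> (e' n' %| e' i)%Z) ->
  forall j, (0 < j)%N -> zspan (initial_term n) (b j *~ (e' n' * e n ^+ n')).
Proof.
move=> rec' n_gt0 n'_gt0 top_dvd.
apply: (linrec_scaled_span rec' (h := fun=> e n ^+ n')) => // [j|i j i_range _].
  case/andP=> j_gt0 lt_jn'; rewrite -(subnKC (ltnW lt_jn')) exprD mulrCA mulrzA.
  exact/zspanMz/linrec_top_power_span.
by rewrite mulrC; apply/dvdz_mul => //; apply: top_dvd.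
Qed.

Theorem linrec2_initial_span e' n' :
  (forall p, prime p -> exists2 i, (0 < i <= n)%N & ~~ (p%:Z %| e i)%Z) ->
  linrec e' n' -> (0 < n)%N -> (0 < n')%N -> 0 < e n -> 0 < e' n' ->
  (forall i, (0 < i < n')%N -> (e' n' %| e' i)%Z) ->
  forall j, (0 < j)%N -> zspan (initial_term n) (b j).
Proof.
move=> e_coprime rec' n_gt0 n'_gt0 en_gt0 e'n'_gt0 top_dvd.
apply: linrec_initial_span e_coprime _ (linrec2_scaled_span rec' n_gt0 n'_gt0 top_dvd).
by rewrite pmulr_rgt0 ?exprn_gt0.
Qed.

End LinearRecurrence.

Section BigGcd.

Variables (m : nat) (z : nat -> int).
Let k := \big[gcdz/0]_(i < m) z i.

Lemma dvdz_biggcd t : (t %| k)%Z = [forall i : 'I_m, (t %| z i)%Z].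
Proof. by rewrite (big_morph (fun x => (t %| x)%Z) (dvdz_gcd t) (dvdz0 t)) big_andE. Qed.

Lemma dvdz_biggcdr i : (i < m)%N -> (k %| z i)%Z.
Proof.
by move=> lt_im; move: (dvdzz k); rewrite dvdz_biggcd => /forallP/(_ (Ordinal lt_im)).
Qed.

Lemma biggcd_gt0 i : (i < m)%N -> z i != 0 -> 0 < k.
Proof.
move=> lt_im zi_neq0; rewrite lt_def; apply/andP; split.
  by apply/eqP => k0; move: (dvdz_biggcdr lt_im) zi_neq0; rewrite k0 dvd0z => ->.
by apply: (big_rec (fun x : int => 0 <= x)) => // j x _ _; rewrite /gcdz.
Qed.

Lemma biggcd_quotient_prime_free p : prime p -> 0 < k ->
  exists2 i, (i < m)%N & ~~ (p%:Z %| z i %/ k)%Z.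
Proof.
move=> p_pr k_gt0.
have [i /= ndvd | all_dvd] := pickP (fun i : 'I_m => ~~ (p%:Z %| z i %/ k)%Z).
  by exists i.
have : (k * p%:Z %| k)%Z.
  rewrite dvdz_biggcd; apply/forallP => i; rewrite -(divzK (dvdz_biggcdr (ltn_ord i))).
  by rewrite mulrC dvdz_mul2l ?gt_eqF //; move/negbFE: (all_dvd i).
rewrite -[X in (_ %| X)%Z]mulr1 dvdz_mul2l ?gt_eqF // dvdzE /= dvdn1 => /eqP p1.
by rewrite p1 in p_pr.
Qed.

End BigGcd.

Section PowersInNonunitalRing.

Variables (V : zmodType) (mul : V -> V -> V) (a : V).

Lemma rpowS j : (0 < j)%N -> rpow mul a j.+1 = mul a (rpow mul a j).
Proof. by case: j. Qed.

Lemma eval0_mulrz (p : {poly int}) k :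
  eval0 mul p a *~ k = \sum_(1 <= i < size p) rpow mul a i *~ k *~ p`_i.
Proof. by rewrite /eval0 mulrz_suml; apply: eq_bigr => i _; rewrite mulrzAC. Qed.

Lemma monic_annihilator k m (w : nat -> int) : (0 < m)%N ->
  rpow mul a m *~ k = \sum_(1 <= i < m) rpow mul a i *~ k *~ w i ->
  exists phi : {poly int},
    [/\ phi \is monic, phi`_0 = 0, (size phi <= m.+1)%N & eval0 mul phi a *~ k = 0].
Proof.
move=> m_gt0 hw.
pose phi := \poly_(i < m.+1) (if i == m then 1 else if i == 0%N then 0 else - w i).
have size_phi : size phi = m.+1 by rewrite size_poly_eq //= eqxx oner_eq0.
exists phi; split; rewrite ?size_phi //.
- by rewrite monicE /lead_coef size_phi coef_poly ltnSn eqxx.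
- by rewrite coef_poly /= eq_sym (negbTE (lt0n_neq0 m_gt0)).
rewrite eval0_mulrz size_phi big_nat_recr //= coef_poly ltnSn eqxx mulr1z hw -big_split.
rewrite big1_seq // => i /andP[_]; rewrite mem_index_iota => /andP[i_gt0 lt_im].
rewrite coef_poly ltnS (ltnW lt_im) (ltn_eqF lt_im) (gtn_eqF i_gt0) mulrNz.
exact: addNr.
Qed.

Hypothesis mulDr : right_distributive mul +%R.

Definition left_mul := mul a.

Lemma left_mul_is_zmod_morphism : GRing.zmod_morphism left_mul.
Proof. by move=> x y; apply/eqP; rewrite eq_sym subr_eq -mulDr subrK. Qed.

HB.instance Definition _ :=
  GRing.isZmodMorphism.Build V V left_mul left_mul_is_zmod_morphism.

Lemma linrec_rpow k e n :
  \sum_(1 <= i < n.+1) rpow mul a i *~ k *~ e i = 0 ->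
  linrec (fun j => rpow mul a j *~ k) e n.
Proof. by apply: (linrec_shift (L := left_mul)) => j j_gt0; rewrite raddfMz rpowS. Qed.

Lemma linrec_rpow_rev k (z : nat -> int) m :
  (forall i, (i < m)%N -> (k %| z i)%Z) ->
  \sum_(i < m) rpow mul a (m - i) *~ z i = 0 ->
  linrec (fun j => rpow mul a j *~ k) (fun i => (z (m - i)%N %/ k)%Z) m.
Proof.
move=> k_dvd hz; apply: linrec_rpow.
rewrite -[RHS]hz big_add1 /= -(big_mkord xpredT (fun i => rpow mul a (m - i) *~ z i)).
rewrite [LHS]big_nat_rev.
apply: eq_big_nat => i /andP[_ lt_im].
by rewrite add0n subnSK // subKn ?(ltnW lt_im) // -mulrzA mulrC divzK ?k_dvd.
Qed.

Lemma linrec_eval0 k d (p : {poly int}) : p != 0 -> eval0 mul p a *~ d = 0 ->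
  linrec (fun j => rpow mul a j *~ k) (fun i => p`_i * d) (size p).-1.
Proof.
move=> p_neq0 /(congr1 (fun x => x *~ k)); rewrite /= mul0rz mulrzAC eval0_mulrz.
rewrite mulrz_suml => hp; apply: linrec_rpow; rewrite prednK ?size_poly_gt0 //.
by rewrite -[RHS]hp; apply: eq_bigr => i _; rewrite mulrzA.
Qed.

End PowersInNonunitalRing.

Theorem lemma10 (V : zmodType) (mul : V -> V -> V)
  (hring : nonunital_ring_axioms mul) (a : V)
  (m : nat) (hm : (0 < m)%N) (z : nat -> int) (hz0 : 0 < z 0%N)
  (hz : \sum_(i < m) (rpow mul a (m - i)) *~ z i = 0)
  (d : int) (hd : 1 < d) (f : {poly int}) (hfmon : f \is monic)
  (hf0 : f`_0 = 0) (hdf : (eval0 mul f a) *~ d = 0) :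
  let k := \big[gcdz/0]_(i < m) z i in
  exists phi : {poly int},
    [/\ phi \is monic, phi`_0 = 0, (size phi <= m.+1)%N
      & (eval0 mul phi a) *~ k = 0].
Proof.
move=> k; case: hring => _ _ mulDr.
have k_gt0 : 0 < k := biggcd_gt0 hm (lt0r_neq0 hz0).
have k_dvd i : (i < m)%N -> (k %| z i)%Z := @dvdz_biggcdr m z i.
have rec_z := linrec_rpow_rev mulDr k_dvd hz.
have rec_f := linrec_eval0 mulDr k (monic_neq0 hfmon) hdf.
have e_coprime p : prime p ->
    exists2 i, (0 < i <= m)%N & ~~ (p%:Z %| z (m - i)%N %/ k)%Z.
  move=> p_pr; have [i lt_im ndvd] := biggcd_quotient_prime_free p_pr k_gt0.
  by exists (m - i)%N; rewrite ?subn_gt0 ?lt_im ?leq_subr // subKn // ltnW.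
have e_top_gt0 : 0 < (z (m - m)%N %/ k)%Z.
  by rewrite subnn -(pmulr_lgt0 _ k_gt0) divzK ?k_dvd.
have f_top : f`_(size f).-1 * d = d by rewrite -lead_coefE (monicP hfmon) mul1r.
have deg_f_gt0 : (0 < (size f).-1)%N.
  rewrite lt0n; apply/eqP => deg_f0; move: (monicP hfmon).
  by rewrite lead_coefE deg_f0 hf0 => /eqP; rewrite eq_sym oner_eq0.
have f_top_gt0 : 0 < f`_(size f).-1 * d by rewrite f_top (lt_trans ltr01 hd).
have f_top_dvd i : (f`_(size f).-1 * d %| f`_i * d)%Z by rewrite f_top dvdz_mull.
have [w] := zspan_initial_termP (linrec2_initial_span rec_z e_coprime rec_f
  hm deg_f_gt0 e_top_gt0 f_top_gt0 (fun i _ => f_top_dvd i) hm).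
exact: monic_annihilator.
Qed.
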